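(* Define $\tau_{k} = \{T \mid T \subseteq \Omega, |T| = k \in \mathbb{N}\}$ and let $\mathcal{B}_m$ denote any set of binary strings (information resources) of length $m$ or less. Define $q := \mathbb{E}_{T, F}\left[\phi(T,F)\right] = \mathbb{E}_{T,F}[P_\phi(\omega \in T \mid F)] = \Pr(\omega \in T; \mathcal{A})$, the expected decomposable probability of success under the joint distribution on $T \in \tau_{k}$ and $F \in \mathcal{B}_m$ for any fixed algorithm $\mathcal{A}$. Then \[ q \leq \frac{I(T; F) + D(P_T \| \mathcal{U}_T) + 1}{I_{\Omega}}, \] where $I_{\Omega} = -\log k/|\Omega|$, $D(P_T \| \mathcal{U}_T)$ is the Kullback-Leibler divergence between the marginal distribution on $T$ and the uniform distribution on $T$, and $I(T; F)$ is the mutual information. Alternatively, \[ \Pr(\omega \in T; \mathcal{A}) \leq \frac{H(\mathcal{U}_T) - H(T \mid F) + 1}{I_{\Omega}}, \] where $H(\mathcal{U}_T) = \log\binom{|\Omega|}{k}$.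
   Context: Algorithmic search framework: finite discrete search space $\Omega$, random target set $T\subseteq\Omega$ with indicator vector $\mathbf{t}$, random information resource $F$, and a fixed search algorithm $\mathcal{A}$ whose sampled element $\omega$ (or $X$) depends on $T$ only through $F$. A probability-of-success metric $\phi$ is decomposable if there exists a probability vector $\mathbf{P}_{\phi,f}$ over $\Omega$, not a function of the target, with $\phi(t,f)=\mathbf{t}^{\top}\mathbf{P}_{\phi,f}=P_\phi(X\in t\mid f)$. *)

From HB Require Import structures.
From mathcomp Require Import all_boot all_order all_algebra.
From mathcomp Require Import reals exp.
Set Implicit Arguments. Unset Strict Implicit. Unset Printing Implicit Defensive.
Import Order.TTheory GRing.Theory Num.Theory.
Local Open Scope ring_scope.

(* binary strings of length at most m (possible values of an information resource) *)
Definition bitstr (m : nat) := {i : 'I_m.+1 & (nat_of_ord i).-tuple bool}.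

Section Info.
Variable R : realType.

Definition log2 (x : R) : R := ln x / ln 2.

Definition xlog (a b : R) : R := if a == 0 then 0 else a * log2 (a / b).

Variables (Omega : finType) (m : nat).
(* joint distribution of (T, F) *)
Variable P : {set Omega} -> bitstr m -> R.

Definition margT (t : {set Omega}) : R := \sum_(f : bitstr m) P t f.
Definition margF (f : bitstr m) : R := \sum_(t : {set Omega}) P t f.

Definition mutinfo : R :=
  \sum_(t : {set Omega}) \sum_(f : bitstr m) xlog (P t f) (margT t * margF f).

Definition condentropy : R :=
  - \sum_(t : {set Omega}) \sum_(f : bitstr m) xlog (P t f) (margF f).

Definition kl_uniform (k : nat) : R :=
  \sum_(t : {set Omega} | #|t| == k) xlog (margT t) (1 / ('C(#|Omega|, k))%:R).

Definition H_uniform (k : nat) : R := log2 ('C(#|Omega|, k))%:R.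

Definition I_Omega (k : nat) : R := - log2 (k%:R / (#|Omega|)%:R).

(* expected decomposable probability of success:
   q = E_{T,F}[ t^T P_{phi,F} ] = sum_{t,f} P(t,f) sum_{w in t} Pf f w *)
Definition q_success (Pf : bitstr m -> Omega -> R) : R :=
  \sum_(t : {set Omega}) \sum_(f : bitstr m) P t f * \sum_(w in t) Pf f w.
End Info.

From HB Require Import structures.
From mathcomp Require Import all_boot all_order all_algebra.
From mathcomp Require Import reals exp interval_inference convex.
From mathcomp Require Import ring lra.
Set Implicit Arguments. Unset Strict Implicit. Unset Printing Implicit Defensive.
Import Order.TTheory GRing.Theory Num.Theory.
Local Open Scope ring_scope.

(* Write a = |Omega| / k, K = C(|Omega|, k) and pi_f(t) = sum_(w in t) P_phi,f(w).
   For each resource f, the law r_f(t) = (1 + a pi_f(t)) / (2 K) on k-subsets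
   satisfies ln r_f(t) >= pi_f(t) ln a - ln 2 - ln K by concavity of ln.
   Averaging over (T, F) and comparing r_f with the conditional law of T given
   F = f by Gibbs' inequality yields
     q ln a <= ln K + ln 2 - H(T | F) ln 2,
   the second bound; the factor 1/2 in r_f is what costs the extra bit.  The
   first bound follows from I(T; F) + D(P_T || U_T) = H(U_T) - H(T | F). *)

Section LnInequalities.
Variable R : realType.

Lemma mul_ln_le_ln1D (a p : R) : 0 < a -> 0 <= p -> p <= 1 -> p * ln a <= ln (1 + a * p).
Proof.
move=> a_gt0 p_ge0 p_le1.
have := @concave_ln R (Itv01 p_ge0 p_le1) (1 + a) 1 ltac:(lra) ltac:(lra).
rewrite !convRE /= ln1 mulr0 addr0 /unstable.onem.
have -> : p * (1 + a) + (1 - p) * 1 = 1 + a * p by ring.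
apply: le_trans; rewrite ler_wpM2l // ler_ln ?posrE; lra.
Qed.

Lemma gibbs_term (s p q : R) : 0 <= p -> p <= s -> 0 <= q -> (0 < p -> 0 < q) ->
  p * ln q <= p * ln (p / s) + s * q - p.
Proof.
move=> p_ge0 p_les q_ge0 q_pos.
have s_ge0 := le_trans p_ge0 p_les.
have [->|p_neq0] := eqVneq p 0; first by rewrite !mul0r subr0 add0r mulr_ge0.
have p_gt0 : 0 < p by rewrite lt_def p_neq0.
have s_gt0 : 0 < s by apply: lt_le_trans p_les.
have ratio_gt0 : 0 < s * q / p by rewrite divr_gt0 ?mulr_gt0 ?q_pos.
have ln_ratio_le : ln s + ln q - ln p <= (s * q - p) / p.
  have -> : (s * q - p) / p = s * q / p - 1 by field; rewrite gt_eqF.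
  have := @le_ln1Dx R (s * q / p - 1).
  rewrite subrKC ln_div ?lnM ?posrE ?mulr_gt0 ?q_pos //.
  by apply; lra.
move: ln_ratio_le; rewrite ln_div ?posrE // ler_pdivlMr // => ?; nra.
Qed.

Lemma gibbs_inequality (I : finType) (p q : I -> R) :
  (forall i, 0 <= p i) -> (forall i, 0 <= q i) -> (forall i, 0 < p i -> 0 < q i) ->
  \sum_i q i = 1 ->
  \sum_i p i * ln (q i) <= \sum_i p i * ln (p i / \sum_j p j).
Proof.
move=> p_ge0 q_ge0 q_pos q_sum1; set s := \sum_j p j.
have p_les i : p i <= s by rewrite [s](bigD1 i) //= lerDl sumr_ge0.
apply: (@le_trans _ _ (\sum_i (p i * ln (p i / s) + s * q i - p i))).
  by apply: ler_sum => i _; exact: gibbs_term (p_ge0 i) (p_les i) (q_ge0 i) (q_pos i).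
by rewrite !big_split /= sumrN -mulr_sumr q_sum1 mulr1 addrK.
Qed.

End LnInequalities.

Lemma card_draws_mem (T : finType) (k : nat) (w : T) :
  #|[set A : {set T} | #|A| == k.+1 & w \in A]| = 'C(#|T|.-1, k).
Proof.
rewrite -(cardsC1 w) -cards_draws.
have notin_subC1 (B : {set T}) : B \subset [set~ w] -> w \notin B.
  by move=> /subsetP sBw; apply/negP => /sBw; rewrite !inE eqxx.
have -> : [set A : {set T} | #|A| == k.+1 & w \in A] =
    (fun B => w |: B) @: [set B : {set T} | B \subset [set~ w] & #|B| == k].
  apply/setP => A; rewrite inE; apply/andP/imsetP => [[/eqP cardA wA] | [B]].
    exists (A :\ w); last by rewrite setD1K.
    have := cardsD1 w A; rewrite wA cardA !inE subsetDr => -[->]; exact/eqP.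
  rewrite inE => /andP[/notin_subC1 wB /eqP cardB] ->.
  by rewrite cardsU1 wB cardB setU11.
apply: card_in_imset => B1 B2; rewrite !inE => /andP[/notin_subC1 wB1 _].
by move=> /andP[/notin_subC1 wB2 _] eqB; rewrite -(setU1K wB1) -(setU1K wB2) eqB.
Qed.

Lemma sum_draws_sum_mem (R : nmodType) (T : finType) (k : nat) (F : T -> R) :
  \sum_(A : {set T} | #|A| == k.+1) \sum_(w in A) F w = \sum_w (F w *+ 'C(#|T|.-1, k)).
Proof.
rewrite (exchange_big_dep predT) //=; apply: eq_bigr => w _.
by rewrite sumr_const -(card_draws_mem k w); congr (_ *+ _); apply: eq_card => A; rewrite inE.
Qed.

Section GuessMix.
Variables (R : realType) (Omega : finType) (k : nat) (pi : Omega -> R).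
Hypotheses (k_gt0 : (0 < k)%N) (k_le_card : (k <= #|Omega|)%N).
Hypotheses (pi_ge0 : forall w, 0 <= pi w) (pi_sum1 : \sum_w pi w = 1).

Let a : R := #|Omega|%:R / k%:R.
Let K : R := 'C(#|Omega|, k)%:R.

(* Since a * C(|Omega| - 1, k - 1) = K, this is the even mixture of the uniform
   law on k-subsets and of the law proportional to pi(A). *)
Definition guess_mix (A : {set Omega}) : R :=
  if #|A| == k then (1 + a * \sum_(w in A) pi w) / (2 * K) else 0.

Let a_gt0 : 0 < a.
Proof. by rewrite divr_gt0 // ltr0n (leq_trans k_gt0). Qed.

Let K_gt0 : 0 < K.
Proof. by rewrite ltr0n bin_gt0. Qed.

Let sum_mem_ge0 (A : {set Omega}) : 0 <= \sum_(w in A) pi w.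
Proof. exact: sumr_ge0. Qed.

Let sum_mem_le1 (A : {set Omega}) : \sum_(w in A) pi w <= 1.
Proof. by rewrite -pi_sum1 [leRHS](bigID (mem A)) /= lerDl sumr_ge0. Qed.

Lemma guess_mix_gt0 (A : {set Omega}) : #|A| = k -> 0 < guess_mix A.
Proof.
move=> cardA; rewrite /guess_mix cardA eqxx divr_gt0 ?mulr_gt0 //.
by rewrite ltr_pwDl // mulr_ge0 // ltW.
Qed.

Lemma guess_mix_ge0 (A : {set Omega}) : 0 <= guess_mix A.
Proof.
have [cardA|] := eqVneq #|A| k; first exact/ltW/guess_mix_gt0.
by rewrite /guess_mix => /negPf ->.
Qed.

Lemma sum_guess_mix : \sum_A guess_mix A = 1.
Proof.
have card_k : \sum_(A : {set Omega} | #|A| == k) (1 : R) = K.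
  by rewrite sumr_const /K -card_draws; congr (_ *+ _); apply: eq_card => A; rewrite inE.
have sum_pi : \sum_(A : {set Omega} | #|A| == k) \sum_(w in A) pi w
    = 'C(#|Omega|.-1, k.-1)%:R.
  by rewrite -(prednK k_gt0) sum_draws_sum_mem sumrMnl pi_sum1.
have aC : a * 'C(#|Omega|.-1, k.-1)%:R = K.
  rewrite /a mulrAC -natrM mul_bin_diag prednK // natrM mulrAC divff ?mul1r //.
  by rewrite pnatr_eq0 -lt0n.
rewrite /guess_mix -big_mkcond /= -mulr_suml big_split /= card_k -mulr_sumr sum_pi aC.
by rewrite -mulr2n mulr_natl divff // mulrn_eq0 /= gt_eqF.
Qed.

Lemma ln_guess_mix_ge (A : {set Omega}) : #|A| = k ->
  (\sum_(w in A) pi w) * ln a - ln 2 - ln K <= ln (guess_mix A).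
Proof.
move=> cardA; rewrite /guess_mix cardA eqxx.
have mix_gt0 : 0 < 1 + a * \sum_(w in A) pi w by rewrite ltr_pwDl // mulr_ge0 // ltW.
rewrite [ln (_ / (2 * K))]ln_div ?[ln (2 * K)]lnM ?posrE ?mulr_gt0 //.
by have := mul_ln_le_ln1D a_gt0 (sum_mem_ge0 A) (sum_mem_le1 A); lra.
Qed.

End GuessMix.

Lemma xlogE (R : realType) (a b : R) : xlog a b = a * log2 (a / b).
Proof. by rewrite /xlog; case: eqP => [->|]; rewrite ?mul0r. Qed.

Section Entropy.
Variables (R : realType) (Omega : finType) (m : nat).
Variables (P : {set Omega} -> bitstr m -> R) (k : nat).
Hypothesis P_ge0 : forall t f, 0 <= P t f.
Hypothesis P_sum1 : \sum_(t : {set Omega}) \sum_(f : bitstr m) P t f = 1.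
Hypothesis P_supp : forall t f, P t f != 0 -> #|t| = k.

Lemma margT_ge0 (t : {set Omega}) : 0 <= margT P t.
Proof. exact: sumr_ge0. Qed.

Lemma le_margT (t : {set Omega}) (f : bitstr m) : P t f <= margT P t.
Proof. by rewrite /margT (bigD1 f) //= lerDl sumr_ge0. Qed.

Lemma le_margF (t : {set Omega}) (f : bitstr m) : P t f <= margF P f.
Proof. by rewrite /margF (bigD1 t) //= lerDl sumr_ge0. Qed.

Lemma margT_eq0 (t : {set Omega}) : #|t| != k -> margT P t = 0.
Proof.
move=> cardt; apply: big1 => f _; apply/eqP; apply: contraR cardt => /P_supp ->.
by rewrite eqxx.
Qed.

Lemma mutinfoE :
  mutinfo P = - condentropy P - \sum_t margT P t * log2 (margT P t).
Proof.
rewrite /condentropy opprK /mutinfo -sumrB; apply: eq_bigr => t _.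
rewrite [in RHS]/margT mulr_suml -sumrB; apply: eq_bigr => f _; rewrite !xlogE.
have [->|Ptf_neq0] := eqVneq (P t f) 0; first by rewrite !mul0r subrr.
have Ptf_gt0 : 0 < P t f by rewrite lt_def Ptf_neq0 P_ge0.
have T_gt0 := lt_le_trans Ptf_gt0 (le_margT t f).
have F_gt0 := lt_le_trans Ptf_gt0 (le_margF t f).
rewrite -mulrBr /log2 -mulrBl.
by rewrite !ln_div ?lnM ?posrE ?mulr_gt0 //; congr (_ * (_ / _)); ring.
Qed.

Lemma kl_uniformE :
  kl_uniform P k = \sum_t margT P t * log2 (margT P t) + H_uniform R Omega k.
Proof.
rewrite /kl_uniform /H_uniform big_mkcond /=.
under eq_bigr => t _.
  have -> : (if #|t| == k then xlog (margT P t) (1 / 'C(#|Omega|, k)%:R) else 0)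
      = margT P t * log2 (margT P t) + margT P t * log2 'C(#|Omega|, k)%:R.
    have [cardt|/margT_eq0 ->] := eqVneq #|t| k; last by rewrite !mul0r addr0.
    rewrite xlogE; have [->|T_neq0] := eqVneq (margT P t) 0; first by rewrite !mul0r addr0.
    have T_gt0 : 0 < margT P t by rewrite lt_def T_neq0 margT_ge0.
    have C_gt0 : (0 : R) < 'C(#|Omega|, k)%:R by rewrite ltr0n bin_gt0 -cardt max_card.
    by rewrite -mulrDr /log2 -mulrDl -lnM ?posrE // div1r invrK.
  over.
by rewrite big_split /= -mulr_suml [\sum_t margT P t]P_sum1 mul1r.
Qed.

Lemma mutinfo_add_kl_uniform :
  mutinfo P + kl_uniform P k = H_uniform R Omega k - condentropy P.
Proof. rewrite mutinfoE kl_uniformE; ring. Qed.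

Lemma condentropyE :
  condentropy P = - (\sum_t \sum_f P t f * ln (P t f / margF P f)) / ln 2.
Proof.
rewrite /condentropy mulNr mulr_suml; congr (- _); apply: eq_bigr => t _.
by rewrite mulr_suml; apply: eq_bigr => f _; rewrite xlogE /log2 mulrA.
Qed.

End Entropy.

Lemma I_OmegaE (R : realType) (Omega : finType) (k : nat) :
  (0 < k)%N -> (0 < #|Omega|)%N ->
  I_Omega R Omega k = ln (#|Omega|%:R / k%:R) / ln 2.
Proof.
move=> k_gt0 N_gt0; rewrite /I_Omega /log2 -mulNr -lnV ?invf_div // posrE.
by rewrite divr_gt0 ?ltr0n.
Qed.

Section SuccessBound.
Variables (R : realType) (Omega : finType) (m : nat).
Variables (P : {set Omega} -> bitstr m -> R) (Pf : bitstr m -> Omega -> R) (k : nat).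
Hypotheses (k_gt0 : (0 < k)%N) (k_le_card : (k <= #|Omega|)%N).
Hypothesis P_ge0 : forall t f, 0 <= P t f.
Hypothesis P_sum1 : \sum_(t : {set Omega}) \sum_(f : bitstr m) P t f = 1.
Hypothesis P_supp : forall t f, P t f != 0 -> #|t| = k.
Hypotheses (Pf_ge0 : forall f w, 0 <= Pf f w) (Pf_sum1 : forall f, \sum_w Pf f w = 1).

Let success_affine (c d : R) :
  \sum_t \sum_f P t f * ((\sum_(w in t) Pf f w) * c - d) = q_success P Pf * c - d.
Proof.
rewrite /q_success mulr_suml -[d in RHS]mul1r -P_sum1 mulr_suml -sumrB.
apply: eq_bigr => t _; rewrite !mulr_suml -sumrB; apply: eq_bigr => f _; ring.
Qed.

Lemma q_success_ln_le :
  q_success P Pf * ln (#|Omega|%:R / k%:R) <=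
  ln 'C(#|Omega|, k)%:R + ln 2 + \sum_t \sum_f P t f * ln (P t f / margF P f).
Proof.
set a := #|Omega|%:R / k%:R; set K : R := 'C(#|Omega|, k)%:R.
pose guess f := guess_mix k (Pf f).
have lower : q_success P Pf * ln a - (ln 2 + ln K) <=
    \sum_t \sum_f P t f * ln (guess f t).
  rewrite -success_affine; apply: ler_sum => t _; apply: ler_sum => f _.
  have [->|/P_supp cardt] := eqVneq (P t f) 0; first by rewrite !mul0r.
  by rewrite ler_wpM2l // opprD addrA ln_guess_mix_ge.
have upper : \sum_t \sum_f P t f * ln (guess f t) <=
    \sum_t \sum_f P t f * ln (P t f / margF P f).
  rewrite exchange_big [leRHS]exchange_big; apply: ler_sum => f _.
  apply: gibbs_inequality => [t | t | t Ptf_gt0 |]; rewrite ?P_ge0 ?guess_mix_ge0 //.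
    by apply: guess_mix_gt0 => //; exact: P_supp (lt0r_neq0 Ptf_gt0).
  exact: sum_guess_mix.
have := le_trans lower upper; lra.
Qed.

End SuccessBound.

Theorem theorem5 (R : realType) (Omega : finType) (k m : nat)
  (Bm : {set bitstr m})
  (P : {set Omega} -> bitstr m -> R)
  (Pf : bitstr m -> Omega -> R) :
  (0 < k)%N -> (k < #|Omega|)%N ->
  (* P is a joint distribution on tau_k x B_m *)
  (forall t f, 0 <= P t f) ->
  \sum_(t : {set Omega}) \sum_(f : bitstr m) P t f = 1 ->
  (forall t f, P t f != 0 -> #|t| = k /\ f \in Bm) ->
  (* the algorithm: for each resource f, a probability vector P_{phi,f} on Omega *)
  (forall f w, 0 <= Pf f w) ->
  (forall f, \sum_(w : Omega) Pf f w = 1) ->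
  q_success P Pf
    <= (mutinfo P + kl_uniform P k + 1) / I_Omega R Omega k
  /\ q_success P Pf
    <= (H_uniform R Omega k - condentropy P + 1) / I_Omega R Omega k.
Proof.
move=> k_gt0 k_lt_card P_ge0 P_sum1 P_supp Pf_ge0 Pf_sum1.
have P_card t f : P t f != 0 -> #|t| = k by move=> /P_supp[].
rewrite mutinfo_add_kl_uniform //.
suff bound : q_success P Pf <=
    (H_uniform R Omega k - condentropy P + 1) / I_Omega R Omega k by split.
have a_gt1 : (1 : R) < #|Omega|%:R / k%:R by rewrite ltr_pdivlMr ?ltr0n // mul1r ltr_nat.
have ln_a_gt0 := ln_gt0 a_gt1.
have ln2_gt0 : (0 : R) < ln 2 by rewrite ln_gt0 // ltr1n.
rewrite condentropyE I_OmegaE ?(leq_trans k_gt0 (ltnW k_lt_card)) // /H_uniform /log2.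
set G := \sum_t _; set lnK := ln _; set lna := ln (_ / _).
have -> : (lnK / ln 2 - - G / ln 2 + 1) / (lna / ln 2) = (lnK + ln 2 + G) / lna.
  by field; rewrite !gt_eqF.
by rewrite ler_pdivlMr // q_success_ln_le // ltnW.
Qed.
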